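(* Let $W$ be any BISO channel and let $\eta=\eta_{KL}(W)$. Then $$\mathrm{BEC}(1-\eta)\succeq_{\mathrm{l.n.}} W\succeq_{\mathrm{l.n.}}\mathrm{BSC}\Big(\tfrac{1-\sqrt{\eta}}{2}\Big).$$ (Note $\eta_{KL}(\mathrm{BEC}(1-\eta))=\eta_{KL}(\mathrm{BSC}(\frac{1-\sqrt\eta}{2}))=\eta$, so among BISO channels with a fixed KL contraction coefficient, the BEC is maximal and the BSC minimal in the less noisy order.)
   Context: A binary-input symmetric-output (BISO) channel is a channel $P_{Y|X}$ with input alphabet $\{0,1\}$ and finite output alphabet $\mathcal Y=\{0,\pm1,\dots,\pm l\}$ for some integer $l\ge 1$ (some transition probabilities may be zero), such that $P_{Y|X}(y|0)=P_{Y|X}(-y|1)=:p_y$ for all $y\in\mathcal Y$. $\mathrm{BSC}(p)$ is the binary symmetric channel on $\{0,1\}$ with crossover probability $p$; $\mathrm{BEC}(\varepsilon)$ is the binary erasure channel with input $\{0,1\}$, output $\{0,e,1\}$, mapping input $x$ to $x$ with probability $1-\varepsilon$ and to the erasure symbol $e$ with probability $\varepsilon$. The KL contraction coefficient is $\eta_{KL}(P)=\sup_{P_X,Q_X}\frac{D(P\circ P_X\|P\circ Q_X)}{D(P_X\|Q_X)}$ (supremum over input distributions with $0<D(P_X\|Q_X)<\infty$, $P\circ P_X$ the output distribution). For channels $P_{Y|X},Q_{Y'|X}$ with the same input alphabet, $P\succeq_{\mathrm{l.n.}}Q$ (less noisy) means: for every finite-alphabet random variable $U$ and every joint distribution $P_{UX}$,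 with $U-X-Y$ and $U-X-Y'$ Markov chains, $I(U:Y)\ge I(U:Y')$. *)

From mathcomp Require Import all_boot all_order all_algebra.
From mathcomp Require Import boolp classical_sets reals exp.
Set Implicit Arguments. Unset Strict Implicit. Unset Printing Implicit Defensive.
Import Order.TTheory GRing.Theory Num.Theory.
Local Open Scope ring_scope.
Local Open Scope classical_set_scope.

Section Defs.
Variable R : realType.

Definition is_dist (T : finType) (P : T -> R) : Prop :=
  (forall t, 0 <= P t) /\ \sum_t P t = 1.

Definition is_channel (X Y : finType) (W : X -> Y -> R) : Prop :=
  forall x, is_dist (W x).

Definition chan_out (X Y : finType) (W : X -> Y -> R) (P : X -> R) : Y -> R :=
  fun y => \sum_x P x * W x y.

(* P << Q : D(P||Q) is finite exactly when this holds *)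
Definition abs_cont (T : finType) (P Q : T -> R) : Prop :=
  forall t, Q t = 0 -> P t = 0.

(* KL divergence (natural log, convention 0 ln 0 = 0); it is the true
   value of D(P||Q) whenever abs_cont P Q holds *)
Definition KLdiv (T : finType) (P Q : T -> R) : R :=
  \sum_t (if P t == 0 then 0 else P t * ln (P t / Q t)).

Definition etaKL (X Y : finType) (W : X -> Y -> R) : R :=
  sup [set r | exists P Q : X -> R,
         [/\ is_dist P, is_dist Q, abs_cont P Q, 0 < KLdiv P Q &
             r = KLdiv (chan_out W P) (chan_out W Q) / KLdiv P Q]].

(* mutual information I(U:Y) where U - X - Y, P_UX a joint distribution
   and Y obtained from X through W: I(U:Y) = D(P_UY || P_U x P_Y) *)
Definition joint_UY (U X Y : finType) (PUX : U * X -> R) (W : X -> Y -> R)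
  : U * Y -> R := fun uy => \sum_x PUX (uy.1, x) * W x uy.2.
Definition marg1 (A B : finType) (P : A * B -> R) : A -> R :=
  fun a => \sum_b P (a, b).
Definition marg2 (A B : finType) (P : A * B -> R) : B -> R :=
  fun b => \sum_a P (a, b).
Definition mutinf (U X Y : finType) (PUX : U * X -> R) (W : X -> Y -> R) : R :=
  let PUY := joint_UY PUX W in
  KLdiv PUY (fun uy => marg1 PUY uy.1 * marg2 PUY uy.2).

Definition less_noisy (X Y Y' : finType) (W : X -> Y -> R) (V : X -> Y' -> R)
  : Prop :=
  forall (U : finType) (PUX : U * X -> R), is_dist PUX ->
    mutinf PUX V <= mutinf PUX W.

(* BSC(p) on {0,1} (false = 0, true = 1) *)
Definition BSC (p : R) : bool -> bool -> R :=
  fun x y => if x == y then 1 - p else p.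

(* BEC(e): output option bool, None = erasure symbol e *)
Definition BEC (e : R) : bool -> option bool -> R :=
  fun x y => match y with
             | None => e
             | Some b => if b == x then 1 - e else 0
             end.

(* BISO channel with output alphabet {-l,...,-1,0,1,...,l}, encoded as
   'I_(2l+1) where index i stands for the integer i - l; negation y |-> -y
   is i |-> 2l - i. Given p_y = P(y|0), P(y|1) = p_{-y}. *)
Definition biso_neg (l : nat) (i : 'I_(l.*2.+1)) : 'I_(l.*2.+1) := rev_ord i.
Definition biso (l : nat) (p : 'I_(l.*2.+1) -> R) : bool -> 'I_(l.*2.+1) -> R :=
  fun x y => if x then p (biso_neg y) else p y.

End Defs.

From mathcomp Require Import all_boot all_order all_algebra.
From mathcomp Require Import all_classical all_reals.
From mathcomp Require Import topology normedtype derive realfun exp.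
From mathcomp Require Import ring lra.
Set Implicit Arguments. Unset Strict Implicit. Unset Printing Implicit Defensive.
Import Order.TTheory GRing.Theory Num.Theory.
Import numFieldNormedType.Exports.
Local Open Scope ring_scope.
Local Open Scope classical_set_scope.

(* A BISO channel is a mixture of binary symmetric channels: the output lands in
   the pair {y, -y} with probability p_y + p_-y, and conditionally on this pair it
   is BSC((1 - t_y) / 2) with t_y = |p_y - p_-y| / (p_y + p_-y).  So for binary
   input laws a, b, D(W a || W b) = E[g(t_y)] where g(t) is the divergence between
   the outputs of BSC((1 - t) / 2); in particular g(1) = D(a || b) and g(0) = 0.
   A third-derivative computation shows that g is convex as a function of t^2.
   Hence g(t) <= t^2 g(1), which gives eta <= E[t_y^2], and by Jensen's inequality
   and monotonicity of g, D(BSC_{sqrt eta} a || BSC_{sqrt eta} b) <= E[g(t_y)].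
   On the other side D(BEC(1 - eta) a || BEC(1 - eta) b) = eta D(a || b), which
   dominates D(W a || W b) by definition of eta.  Both comparisons transfer to the
   less noisy order since I(U : Y) is the P_U-average of D(P_{Y|U=u} || P_Y). *)

Section KLTerm.
Variable R : realType.

Definition kl_term (p q : R) := if p == 0 then 0 else p * ln (p / q).

Lemma KLdivE (T : finType) (P Q : T -> R) : KLdiv P Q = \sum_t kl_term (P t) (Q t).
Proof. by []. Qed.

Lemma kl_term0 q : kl_term 0 q = 0.
Proof. by rewrite /kl_term eqxx. Qed.

Lemma kl_termZ c p q : kl_term (c * p) (c * q) = c * kl_term p q.
Proof.
rewrite /kl_term; have [->|c0] := eqVneq c 0; first by rewrite !mul0r eqxx.
rewrite mulf_eq0 (negbTE c0) /=; case: eqP => [_|_]; first by rewrite mulr0.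
by rewrite invfM mulrACA mulfV // mul1r mulrA.
Qed.

Lemma kl_termxx p : kl_term p p = 0.
Proof. by rewrite /kl_term; case: eqP => // /eqP p0; rewrite mulfV // ln1 mulr0. Qed.

Lemma KLdivxx (T : finType) (P : T -> R) : KLdiv P P = 0.
Proof. by rewrite KLdivE big1 // => t _; rewrite kl_termxx. Qed.

Lemma kl_term_ge_sub p q : 0 <= p -> 0 <= q -> (q = 0 -> p = 0) -> p - q <= kl_term p q.
Proof.
move=> p0 q0 pq; rewrite /kl_term.
have [->|pn] := eqVneq p 0; first by lra.
have pp : 0 < p by rewrite lt_def pn.
have qp : 0 < q by rewrite lt_def q0 andbT; apply: contra pn => /eqP/pq ->.
have lnqp : ln (q / p) <= q / p - 1.
  have := @le_ln1Dx R (q / p - 1); rewrite addrCA subrr addr0; apply.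
  have : 0 < q / p by rewrite divr_gt0.
  lra.
rewrite ln_div ?posrE // in lnqp; rewrite ln_div ?posrE //.
have : p * (ln q - ln p) <= p * (q / p - 1) by rewrite ler_pM2l.
have -> : p * (q / p - 1) = q - p by field; rewrite gt_eqF.
lra.
Qed.

Lemma kl_term_half u w : 0 <= u -> 0 < w ->
  kl_term (u / 2) (w / 2) = (u * ln u - u * ln w) / 2.
Proof.
move=> u0 w0; rewrite /kl_term.
have [->|un] := eqVneq u 0; first by rewrite !mul0r eqxx subrr mul0r.
rewrite mulf_eq0 (negbTE un) /= invr_eq0 pnatr_eq0 /=.
have -> : u / 2 / (w / 2) = u / w by field; rewrite gt_eqF.
have u_gt0 : 0 < u by rewrite lt_def un.
by rewrite ln_div ?posrE //; ring.
Qed.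

End KLTerm.

Section MutualInformation.
Variables (R : realType) (U X : finType) (PUX : U * X -> R).
Hypothesis PUX_dist : is_dist PUX.

Definition cond_dist (u : U) (x : X) := PUX (u, x) / marg1 PUX u.

Lemma marg1_ge0 u : 0 <= marg1 PUX u.
Proof. by apply: sumr_ge0 => x _; case: PUX_dist. Qed.

Lemma marg2_dist : is_dist (marg2 PUX).
Proof.
case: PUX_dist => P0 P1; split => [x|]; first by apply: sumr_ge0 => *.
by rewrite /marg2 exchange_big /= pair_bigA /= -P1; apply: eq_bigr; case.
Qed.

Lemma cond_dist_dist u : marg1 PUX u != 0 -> is_dist (cond_dist u).
Proof.
case: PUX_dist => P0 _ mu; split => [x|]; first by rewrite divr_ge0 ?marg1_ge0.
by rewrite -mulr_suml mulfV.
Qed.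

Lemma cond_dist_abs_cont u : abs_cont (cond_dist u) (marg2 PUX).
Proof.
case: PUX_dist => P0 _ x /eqP; rewrite /marg2 psumr_eq0; last by move=> *.
move=> /allP /(_ u (mem_index_enum _)) /implyP /(_ isT) /eqP.
by rewrite /cond_dist => ->; rewrite mul0r.
Qed.

Lemma mutinf_avg (Y : finType) (V : X -> Y -> R) : (forall x, \sum_y V x y = 1) ->
  mutinf PUX V =
  \sum_u marg1 PUX u * KLdiv (chan_out V (cond_dist u)) (chan_out V (marg2 PUX)).
Proof.
case: PUX_dist => P0 _ V1; rewrite /mutinf KLdivE.
set PUY := joint_UY PUX V.
have m1 u : marg1 PUY u = marg1 PUX u.
  rewrite /marg1 /PUY /joint_UY /= exchange_big /=; apply: eq_bigr => x _.
  by rewrite -mulr_sumr V1 mulr1.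
have m2 y : marg2 PUY y = chan_out V (marg2 PUX) y.
  rewrite /marg2 /PUY /joint_UY /chan_out /= exchange_big /=; apply: eq_bigr => x _.
  by rewrite mulr_suml.
rewrite -(pair_bigA _ (fun u y => kl_term (PUY (u, y)) (marg1 PUY u * marg2 PUY y))) /=.
apply: eq_bigr => u _; rewrite KLdivE m1.
have [mu0|mu] := eqVneq (marg1 PUX u) 0.
  rewrite mu0 mul0r; apply: big1 => y _; rewrite mul0r /PUY /joint_UY /= big1 ?kl_term0 //.
  move=> x _; move/eqP: mu0; rewrite psumr_eq0; last by move=> *.
  by move=> /allP /(_ x (mem_index_enum _)) /implyP /(_ isT) /eqP ->; rewrite mul0r.
rewrite mulr_sumr; apply: eq_bigr => y _; rewrite m2 -kl_termZ; congr kl_term.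
rewrite /PUY /joint_UY /chan_out /cond_dist /= mulr_sumr; apply: eq_bigr => x _.
by field.
Qed.

End MutualInformation.

Lemma less_noisy_of_KLdiv_le (R : realType) (X Y Y' : finType)
    (W : X -> Y -> R) (V : X -> Y' -> R) :
  (forall x, \sum_y W x y = 1) -> (forall x, \sum_y V x y = 1) ->
  (forall a b : X -> R, is_dist a -> is_dist b -> abs_cont a b ->
     KLdiv (chan_out V a) (chan_out V b) <= KLdiv (chan_out W a) (chan_out W b)) ->
  less_noisy W V.
Proof.
move=> W1 V1 KL_le U PUX dPUX; rewrite !mutinf_avg //; apply: ler_sum => u _.
have [->|mu] := eqVneq (marg1 PUX u) 0; first by rewrite !mul0r.
apply/ler_wpM2l/KL_le; first exact: marg1_ge0.
- exact: cond_dist_dist.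
- exact: marg2_dist.
- exact: cond_dist_abs_cont.
Qed.

Section RealCalculus.
Variable R : realType.
Implicit Types (f g : R -> R) (a b c y : R).

(* Differentiation rules on explicit lambdas, so that the derivative of a compound
   expression can be assembled as a proof term. *)
Lemma is_derive1_add f g a b y : is_derive y 1 f a -> is_derive y 1 g b ->
  is_derive y 1 (fun t => f t + g t) (a + b).
Proof. by move=> fa gb; exact: (@is_deriveD _ _ _ f g). Qed.

Lemma is_derive1_sub f g a b y : is_derive y 1 f a -> is_derive y 1 g b ->
  is_derive y 1 (fun t => f t - g t) (a - b).
Proof. by move=> fa gb; exact: (@is_deriveB _ _ _ f g). Qed.

Lemma is_derive1_mul f g a b y : is_derive y 1 f a -> is_derive y 1 g b ->
  is_derive y 1 (fun t => f t * g t) (f y * b + g y * a).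
Proof. by move=> fa gb; exact: (@is_deriveM _ _ f g). Qed.

Lemma is_derive1_inv f a y : is_derive y 1 f a -> f y != 0 ->
  is_derive y 1 (fun t => (f t)^-1) (- a / (f y) ^+ 2).
Proof.
by move=> fa fy0; have := is_deriveV fy0 fa; rewrite [_ *: _]mulrC mulrN mulNr.
Qed.

Lemma is_derive1_cst c y : is_derive y 1 (fun _ : R => c) 0.
Proof. exact: is_derive_cst. Qed.

Lemma is_derive1_id y : is_derive y 1 (fun t : R => t) 1.
Proof. exact: is_derive_id. Qed.

Lemma is_derive1_eq f a b y : is_derive y 1 f a -> a = b -> is_derive y 1 f b.
Proof. by move=> ? <-. Qed.

Lemma is_derive1_affine c y : is_derive y 1 (fun t : R => 1 + t * c) c.
Proof.
apply: is_derive1_eq (is_derive1_add (is_derive1_cst 1 y)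
  (is_derive1_mul (is_derive1_id y) (is_derive1_cst c y))) _; ring.
Qed.

Lemma is_derive1_ln_affine c y : 0 < 1 + y * c ->
  is_derive y 1 (fun t : R => ln (1 + t * c)) (c / (1 + y * c)).
Proof.
move=> hy; have := @is_derive1_comp R (@ln R) (fun t => 1 + t * c) y _ _
  (is_derive1_ln hy) (is_derive1_affine c y).
by rewrite mulrC.
Qed.

Lemma is_derive1_continuous f a y : is_derive y 1 f a -> {for y, continuous f}.
Proof. by case=> fy _; apply/differentiable_continuous/derivable1_diffP. Qed.

Lemma norm_xlnx_lt (z e : R) : 0 < e -> `|z| < Num.min 1 ((e / 2) ^+ 2) ->
  `|z * ln z| < e.
Proof.
move=> e0; rewrite lt_min => /andP[z1 ze].
have [z0|z0] := leP z 0; first by rewrite ln0 // mulr0 normr0.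
have lnz : ln z < 0 by apply: ln_lt0; rewrite z0 /=; move: z1; rewrite gtr0_norm.
rewrite ltr0_norm; last by rewrite pmulr_rlt0.
set s := Num.sqrt z.
have s0 : 0 < s by rewrite sqrtr_gt0.
have zs : z = s ^+ 2 by rewrite sqr_sqrtr // ltW.
have lns : ln z = 2 * ln s by rewrite zs lnXn // mulr2n mulr_natl mulr2n.
have lnVs : - ln s < s^-1 by rewrite -lnV ?posrE // ln_sublinear // invr_gt0.
have se : s < e / 2.
  rewrite gtr0_norm // in ze.
  by rewrite -(@ltr_pXn2r _ 2) ?nnegrE ?ltW ?divr_gt0 // -zs.
have -> : - (z * ln z) = (2 * s ^+ 2) * (- ln s) by rewrite lns zs; ring.
apply: (@lt_le_trans _ _ ((2 * s ^+ 2) * s^-1)).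
  by rewrite ltr_pM2l // mulr_gt0 // exprn_gt0.
have -> : (2 * s ^+ 2) * s^-1 = 2 * s by field; rewrite gt_eqF.
by rewrite -lter_pdivlMl // mulrC ltW.
Qed.

Lemma xlnx_continuous0 : {for 0, continuous (fun z : R => z * ln z)}.
Proof.
rewrite /prop_for /continuous_at /= mul0r.
apply/cvgr0Pnorm_lt => e e0.
have m0 : 0 < Num.min 1 ((e / 2) ^+ 2) :> R.
  by rewrite lt_min ltr01 /= exprn_gt0 // divr_gt0.
near=> z; exact: norm_xlnx_lt.
Unshelve. all: by end_near. Qed.

Lemma continuousD_fun (f g : R -> R) z : {for z, continuous f} -> {for z, continuous g} ->
  {for z, continuous (fun t => f t + g t)}.
Proof. exact: continuousD. Qed.

Lemma continuousB_fun (f g : R -> R) z : {for z, continuous f} -> {for z, continuous g} ->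
  {for z, continuous (fun t => f t - g t)}.
Proof. exact: continuousB. Qed.

Lemma continuousM_fun (f g : R -> R) z : {for z, continuous f} -> {for z, continuous g} ->
  {for z, continuous (fun t => f t * g t)}.
Proof. exact: continuousM. Qed.

Lemma continuous_affine_xlnx (c z : R) : 0 <= 1 + z * c ->
  {for z, continuous (fun t : R => (1 + t * c) * ln (1 + t * c))}.
Proof.
move=> hz; apply: (@continuous_comp _ _ _ (fun t : R => 1 + t * c) (fun u => u * ln u)).
  exact: is_derive1_continuous (is_derive1_affine c z).
rewrite /=; case: (ltgtP 0 (1 + z * c)) hz => // [hp _|<- _]; last exact: xlnx_continuous0.
exact: is_derive1_continuous (is_derive1_mul (is_derive1_id _) (is_derive1_ln hp)).
Qed.

Lemma is_derive_ge0_le f df a b : a <= b ->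
  (forall z, a < z < b -> is_derive z 1 f (df z)) ->
  (forall z, a < z < b -> 0 <= df z) ->
  (forall z, a <= z <= b -> {for z, continuous f}) -> f a <= f b.
Proof.
move=> ab fdf df0 fc.
case: (ltgtP a b) ab => // [altb _|-> _]; last by [].
have fdf' z : z \in `]a, b[%R -> is_derive z 1 f (df z).
  by rewrite in_itv /= => /fdf.
have fcab : {within `[a, b], continuous f}.
  by apply: continuous_in_subspaceT => z; rewrite inE /= in_itv /= => /fc.
rewrite -subr_ge0; have [c cab ->] := MVT altb fdf' fcab.
rewrite mulr_ge0 ?subr_ge0 ?(ltW altb) //.
by apply: df0; rewrite in_itv /= in cab.
Qed.

Lemma is_derive_le0_ge f df a b : a <= b ->
  (forall z, a < z < b -> is_derive z 1 f (df z)) ->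
  (forall z, a < z < b -> df z <= 0) ->
  (forall z, a <= z <= b -> {for z, continuous f}) -> f b <= f a.
Proof.
move=> ab fdf df0 fc; rewrite -lerN2.
apply: (@is_derive_ge0_le (fun t => - f t) (fun t => - df t)) => // z zab.
- exact: is_deriveN (fdf z zab).
- by rewrite oppr_ge0 df0.
- exact/continuousN/fc.
Qed.

End RealCalculus.

(* [kl_bsc3 t] is [2 / t ^+ 3] times this form at [(t * A, t * B)]. *)
Lemma kl_bsc3_form_ge0 (R : realType) (a b : R) : 0 < 1 - a * a -> 0 < 1 - b * b ->
  0 <= a ^+ 4 / (1 - a ^+ 2) ^+ 2 - a * b ^+ 3 / (1 - b ^+ 2) ^+ 2
       + b ^+ 3 * (b - a) * (3 + b ^+ 2) / (1 - b ^+ 2) ^+ 3.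
Proof.
rewrite -!expr2 => ha hb.
set pa := a ^+ 2 / (1 - a ^+ 2); set pb := b ^+ 2 / (1 - b ^+ 2).
have -> : a ^+ 4 / (1 - a ^+ 2) ^+ 2 - a * b ^+ 3 / (1 - b ^+ 2) ^+ 2
       + b ^+ 3 * (b - a) * (3 + b ^+ 2) / (1 - b ^+ 2) ^+ 3 =
   (pa - pb) ^+ 2 + 2 * pb * ((a - b) ^+ 2 * ((a + b) ^+ 2 + (1 - a ^+ 2)))
      / ((1 - a ^+ 2) * (1 - b ^+ 2) ^+ 2).
  by rewrite /pa /pb; field; rewrite !gt_eqF.
have pb0 : 0 <= pb by rewrite divr_ge0 ?sqr_ge0 ?ltW.
apply: addr_ge0; first exact: sqr_ge0.
apply: divr_ge0; last by rewrite mulr_ge0 ?exprn_ge0 ?ltW.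
apply: mulr_ge0; first exact: mulr_ge0.
apply: mulr_ge0; first exact: sqr_ge0.
by apply: addr_ge0; [exact: sqr_ge0 | exact: ltW].
Qed.

Lemma affine_gt0 (R : realType) (c t : R) : -1 <= c <= 1 -> -1 < t < 1 -> 0 < 1 + t * c.
Proof.
move=> /andP[c1 c2] /andP[t1 t2]; have [c0|c0] := leP 0 c.
  have : 0 <= (t + 1) * c by apply: mulr_ge0; lra.
  nra.
have : 0 < (1 - t) * - c by apply: mulr_gt0; lra.
nra.
Qed.

Lemma one_sub_sqr_gt0 (R : realType) (c t : R) :
  0 < 1 + t * c -> 0 < 1 + t * - c -> 0 < 1 - t * t * (c * c).
Proof.
move=> p1 p2; have -> : 1 - t * t * (c * c) = (1 + t * c) * (1 + t * - c) by ring.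
exact: mulr_gt0.
Qed.

Lemma weight_sqr_sum1 (R : realDomainType) (I : finType) (w th : I -> R) :
  (forall i, 0 <= w i) -> \sum_i w i = 1 -> (forall i, 0 <= th i <= 1) ->
  \sum_i w i * (th i * th i) = 1 -> forall i, w i != 0 -> th i = 1.
Proof.
move=> w0 w1 th01 S1 i wi.
have defect_ge0 j : true -> 0 <= w j * (1 - th j * th j).
  by move=> _; case/andP: (th01 j) => ? ?; rewrite mulr_ge0 ?w0 // subr_ge0; nra.
have defect0 : \sum_j w j * (1 - th j * th j) = 0.
  rewrite (eq_bigr (fun j => w j - w j * (th j * th j))) => [|j _].
    by rewrite sumrB w1 S1 subrr.
  by rewrite mulrBr mulr1.
move/eqP: (@psumr_eq0P _ _ _ _ defect_ge0 defect0 i isT).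
rewrite mulf_eq0 (negbTE wi) subr_eq0 /= => /eqP th1.
by case/andP: (th01 i) => ? ?; nra.
Qed.

Section BinaryDivergence.
Variables (R : realType) (A B : R).
Hypotheses (hA : -1 <= A <= 1) (hB : -1 < B < 1).
Implicit Types (s t u z : R).

(* For binary distributions a, b with A = 2 a(1) - 1 and B = 2 b(1) - 1,
   [kl_bsc t] is D(BSC((1 - t)/2) a || BSC((1 - t)/2) b) (lemma [KLdiv_BSC]). *)
Definition kl_bsc (t : R) :=
  ((1 + t * A) * ln (1 + t * A) + (1 + t * - A) * ln (1 + t * - A)
   - (1 + t * A) * ln (1 + t * B) - (1 + t * - A) * ln (1 + t * - B)) / 2.

Definition kl_bsc1 (t : R) :=
  A * (ln (1 + t * A) - ln (1 + t * - A) - ln (1 + t * B) + ln (1 + t * - B)) / 2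
  + t * B * (B - A) / (1 - t * t * (B * B)).

Definition kl_bsc2 (t : R) :=
  A * A / (1 - t * t * (A * A)) - A * B / (1 - t * t * (B * B))
  + B * (B - A) * (1 + t * t * (B * B)) / (1 - t * t * (B * B)) / (1 - t * t * (B * B)).

Definition kl_bsc3 (t : R) :=
  2 * t * (A ^+ 4 / (1 - t ^+ 2 * A ^+ 2) ^+ 2 - A * B ^+ 3 / (1 - t ^+ 2 * B ^+ 2) ^+ 2
    + B ^+ 3 * (B - A) * (3 + t ^+ 2 * B ^+ 2) / (1 - t ^+ 2 * B ^+ 2) ^+ 3).

Lemma kl_bsc_factors_gt0 (t : R) : -1 < t < 1 ->
  [/\ 0 < 1 + t * A, 0 < 1 + t * - A, 0 < 1 + t * B & 0 < 1 + t * - B].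
Proof.
case/andP: hA => ? ?; case/andP: hB => ? ? ht.
by split; apply: affine_gt0 => //; apply/andP; split; lra.
Qed.

Lemma kl_bsc_denoms_neq0 (t : R) : -1 < t < 1 ->
  [/\ 1 + t * A != 0, 1 + t * - A != 0, 1 + t * B != 0, 1 + t * - B != 0
    & (1 - t * t * (A * A) != 0) && (1 - t * t * (B * B) != 0)].
Proof.
move=> /kl_bsc_factors_gt0[p1 p2 p3 p4].
by rewrite !gt_eqF ?one_sub_sqr_gt0.
Qed.

Lemma is_derive_kl_bsc (t : R) : -1 < t < 1 -> is_derive t 1 kl_bsc (kl_bsc1 t).
Proof.
move=> ht; have [p1 p2 p3 p4] := kl_bsc_factors_gt0 ht.
have [n1 n2 n3 n4 /andP[nA nB]] := kl_bsc_denoms_neq0 ht.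
have xlnx c d : 0 < 1 + t * d -> is_derive t 1 (fun s => (1 + s * c) * ln (1 + s * d))
    ((1 + t * c) * (d / (1 + t * d)) + ln (1 + t * d) * c).
  by move=> hd; apply/is_derive1_mul/is_derive1_ln_affine/hd/is_derive1_affine.
apply: is_derive1_eq (is_derive1_mul (is_derive1_sub (is_derive1_sub
  (is_derive1_add (xlnx A _ p1) (xlnx (- A) _ p2)) (xlnx A _ p3)) (xlnx (- A) _ p4))
  (is_derive1_cst 2^-1 t)) _.
by rewrite /kl_bsc1; field; rewrite n1 n2 n3 n4 nB.
Qed.

Lemma is_derive_one_sub_sqr (c t : R) :
  is_derive t 1 (fun s : R => 1 - s * s * c) (- (t + t) * c).
Proof.
apply: is_derive1_eq (is_derive1_sub (is_derive1_cst 1 t) (is_derive1_mul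
  (is_derive1_mul (is_derive1_id t) (is_derive1_id t)) (is_derive1_cst c t))) _.
ring.
Qed.

Lemma is_derive_kl_bsc1 (t : R) : -1 < t < 1 -> is_derive t 1 kl_bsc1 (kl_bsc2 t).
Proof.
move=> ht; have [p1 p2 p3 p4] := kl_bsc_factors_gt0 ht.
have [n1 n2 n3 n4 /andP[nA nB]] := kl_bsc_denoms_neq0 ht.
have dl := is_derive1_mul (is_derive1_mul (is_derive1_cst A t)
  (is_derive1_add (is_derive1_sub (is_derive1_sub (is_derive1_ln_affine p1)
  (is_derive1_ln_affine p2)) (is_derive1_ln_affine p3)) (is_derive1_ln_affine p4)))
  (is_derive1_cst 2^-1 t).
have dr := is_derive1_mul (is_derive1_mul (is_derive1_mul (is_derive1_id t)
  (is_derive1_cst B t)) (is_derive1_cst (B - A) t))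
  (is_derive1_inv (is_derive_one_sub_sqr (B * B) t) nB).
apply: is_derive1_eq (is_derive1_add dl dr) _.
by rewrite /kl_bsc2; field; rewrite n1 n2 n3 n4 nA nB.
Qed.

Lemma is_derive_kl_bsc2 (t : R) : -1 < t < 1 -> is_derive t 1 kl_bsc2 (kl_bsc3 t).
Proof.
move=> ht; have [_ _ _ _ /andP[nA nB]] := kl_bsc_denoms_neq0 ht.
have dinv c := is_derive1_inv (is_derive_one_sub_sqr c t).
have d1 := is_derive1_mul (is_derive1_cst (A * A) t) (dinv _ nA).
have d2 := is_derive1_mul (is_derive1_cst (A * B) t) (dinv _ nB).
have d3 := is_derive1_mul (is_derive1_mul (is_derive1_mul (is_derive1_cst (B * (B - A)) t)
  (is_derive1_add (is_derive1_cst 1 t) (is_derive1_mul (is_derive1_mul (is_derive1_id t)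
  (is_derive1_id t)) (is_derive1_cst (B * B) t)))) (dinv _ nB)) (dinv _ nB).
apply: is_derive1_eq (is_derive1_add (is_derive1_sub d1 d2) d3) _.
have eA : (t * A) ^+ 2 = t * t * (A * A) by ring.
have eB : (t * B) ^+ 2 = t * t * (B * B) by ring.
by rewrite /kl_bsc3; field; rewrite eA eB nA nB.
Qed.

Lemma kl_bsc3_ge0 (t : R) : 0 <= t < 1 -> 0 <= kl_bsc3 t.
Proof.
case/andP => t0 t1; have [->|tn0] := eqVneq t 0; first by rewrite /kl_bsc3 mulr0 mul0r.
have ht : -1 < t < 1 by apply/andP; split; lra.
have [p1 p2 p3 p4] := kl_bsc_factors_gt0 ht.
have qA : 0 < 1 - (t * A) * (t * A) by rewrite mulrACA; exact: one_sub_sqr_gt0.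
have qB : 0 < 1 - (t * B) * (t * B) by rewrite mulrACA; exact: one_sub_sqr_gt0.
have := kl_bsc3_form_ge0 qA qB; set F := (X in 0 <= X -> _) => F0.
have eA : 1 - (t * A) ^+ 2 = 1 - t ^+ 2 * A ^+ 2 by rewrite exprMn.
have eB : 1 - (t * B) ^+ 2 = 1 - t ^+ 2 * B ^+ 2 by rewrite exprMn.
have nA : 1 - t ^+ 2 * A ^+ 2 != 0 by rewrite -eA expr2 gt_eqF.
have nB : 1 - t ^+ 2 * B ^+ 2 != 0 by rewrite -eB expr2 gt_eqF.
have -> : kl_bsc3 t = 2 / t ^+ 3 * F.
  by rewrite /kl_bsc3 /F; field; rewrite eA eB nA nB tn0.
by rewrite mulr_ge0 // divr_ge0 // exprn_ge0.
Qed.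

Lemma kl_bsc0 : kl_bsc 0 = 0.
Proof. by rewrite /kl_bsc !(mul0r, addr0, ln1, mulr0, subr0). Qed.

Lemma kl_bsc1_0 : kl_bsc1 0 = 0.
Proof. by rewrite /kl_bsc1 !(mul0r, addr0, subr0, ln1, subrr, mulr0). Qed.

(* The key convexity estimate: [t |-> kl_bsc1 t / t] is nondecreasing on ]0, 1[
   because [(t * kl_bsc2 t - kl_bsc1 t)' = t * kl_bsc3 t >= 0]. *)
Lemma kl_bsc1_le (t : R) : 0 <= t < 1 -> kl_bsc1 t <= t * kl_bsc2 t.
Proof.
case/andP => t0 t1; rewrite -subr_ge0.
have d s : -1 < s < 1 ->
    is_derive s 1 (fun s => s * kl_bsc2 s - kl_bsc1 s) (s * kl_bsc3 s).
  move=> hs; apply: is_derive1_eq (is_derive1_sub (is_derive1_mul (is_derive1_id s)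
    (is_derive_kl_bsc2 hs)) (is_derive_kl_bsc1 hs)) _; ring.
have -> : 0 = 0 * kl_bsc2 0 - kl_bsc1 0 by rewrite kl_bsc1_0 mul0r subr0.
apply: (@is_derive_ge0_le _ (fun s => s * kl_bsc2 s - kl_bsc1 s) (fun s => s * kl_bsc3 s))
  => // s /andP[s0 s1].
- by apply: d; apply/andP; split; lra.
- by rewrite mulr_ge0 ?kl_bsc3_ge0 //; [lra | apply/andP; split; lra].
- by apply: is_derive1_continuous (d _ _); apply/andP; split; lra.
Qed.

Definition kl_bsc_slope (t : R) := kl_bsc1 t / t.

Lemma kl_bsc_slope_le (s t : R) : 0 < s -> s <= t -> t < 1 ->
  kl_bsc_slope s <= kl_bsc_slope t.
Proof.
move=> s0 st t1.
have d u : 0 < u < 1 ->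
    is_derive u 1 kl_bsc_slope ((u * kl_bsc2 u - kl_bsc1 u) / u ^+ 2).
  move=> /andP[u0 u1]; have hu : -1 < u < 1 by apply/andP; split; lra.
  have un0 : u != 0 by rewrite gt_eqF.
  apply: is_derive1_eq (is_derive1_mul (is_derive_kl_bsc1 hu)
    (is_derive1_inv (is_derive1_id u) un0)) _.
  by field.
apply: (@is_derive_ge0_le _ kl_bsc_slope (fun u => (u * kl_bsc2 u - kl_bsc1 u) / u ^+ 2))
  => // u /andP[su ut].
- by apply: d; apply/andP; split; lra.
- rewrite divr_ge0 ?sqr_ge0 // subr_ge0 kl_bsc1_le //; apply/andP; split; lra.
- by apply: is_derive1_continuous (d _ _); apply/andP; split; lra.
Qed.

Lemma kl_bsc_continuous (z : R) : 0 <= z <= 1 -> {for z, continuous kl_bsc}.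
Proof.
case/andP => z0 z1; case/andP: hA => A1 A2; case/andP: hB => B1 B2.
have q1 : 0 < 1 + z * B by nra.
have q2 : 0 < 1 + z * - B by nra.
have xlny c d : 0 < 1 + z * d ->
    {for z, continuous (fun s => (1 + s * c) * ln (1 + s * d))}.
  move=> hd; exact: is_derive1_continuous
    (is_derive1_mul (is_derive1_affine c z) (is_derive1_ln_affine hd)).
apply: continuousM_fun; last exact: is_derive1_continuous (is_derive1_cst _ z).
apply: continuousB_fun; last exact: xlny q2.
apply: continuousB_fun; last exact: xlny q1.
by apply: continuousD_fun; apply: continuous_affine_xlnx; nra.
Qed.

(* Convexity of [kl_bsc] in [t ^+ 2], in tangent-line form at [s]. *)
Lemma kl_bsc_tangent s t : 0 < s < 1 -> 0 <= t <= 1 ->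
  kl_bsc s + kl_bsc_slope s / 2 * (t * t - s * s) <= kl_bsc t.
Proof.
case/andP => s0 s1; case/andP => t0 t1.
set c := kl_bsc_slope s / 2; set Phi := fun u => kl_bsc u - c * (u * u).
suff : Phi s <= Phi t by rewrite /Phi; lra.
have dsq u : is_derive u 1 (fun v => c * (v * v)) (c * (u * 1 + u * 1) + u * u * 0).
  exact: is_derive1_mul (is_derive1_cst c u)
    (is_derive1_mul (is_derive1_id u) (is_derive1_id u)).
have dPhi u : 0 < u < 1 -> is_derive u 1 Phi (u * (kl_bsc_slope u - kl_bsc_slope s)).
  move=> /andP[u0 u1]; have hu : -1 < u < 1 by apply/andP; split; lra.
  apply: is_derive1_eq (is_derive1_sub (is_derive_kl_bsc hu) (dsq u)) _.
  by rewrite /c /kl_bsc_slope; field; rewrite !gt_eqF.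
have cPhi u : 0 <= u <= 1 -> {for u, continuous Phi}.
  move=> hu; apply: continuousB_fun; first exact: kl_bsc_continuous.
  exact: is_derive1_continuous (dsq u).
have [st|ts] := leP s t.
  apply: (@is_derive_ge0_le _ Phi (fun u => u * (kl_bsc_slope u - kl_bsc_slope s)))
    => // u /andP[su ut].
  - by apply: dPhi; apply/andP; split; lra.
  - by rewrite mulr_ge0 ?subr_ge0 ?kl_bsc_slope_le //; lra.
  - by apply: cPhi; apply/andP; split; lra.
apply: (@is_derive_le0_ge _ Phi (fun u => u * (kl_bsc_slope u - kl_bsc_slope s)))
  => [|u /andP[tu us]|u /andP[tu us]|u /andP[tu us]]; first exact: ltW.
- by apply: dPhi; apply/andP; split; lra.
- by rewrite mulr_ge0_le0 ?subr_le0 ?kl_bsc_slope_le //; lra.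
- by apply: cPhi; apply/andP; split; lra.
Qed.

Lemma kl_bsc_E t : 0 <= t <= 1 ->
  kl_term ((1 + t * A) / 2) ((1 + t * B) / 2)
  + kl_term ((1 + t * - A) / 2) ((1 + t * - B) / 2) = kl_bsc t.
Proof.
case/andP => t0 t1; case/andP: hA => ? ?; case/andP: hB => ? ?.
by rewrite !kl_term_half; [rewrite /kl_bsc; field | nra ..].
Qed.

Lemma kl_bsc_ge0 t : 0 <= t <= 1 -> 0 <= kl_bsc t.
Proof.
move=> ht; rewrite -kl_bsc_E //; case/andP: ht => t0 t1.
case/andP: hA => ? ?; case/andP: hB => ? ?.
have q1 : 0 < (1 + t * B) / 2 by apply: divr_gt0 => //; nra.
have q2 : 0 < (1 + t * - B) / 2 by apply: divr_gt0 => //; nra.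
have p1 : 0 <= (1 + t * A) / 2 by apply: divr_ge0 => //; nra.
have p2 : 0 <= (1 + t * - A) / 2 by apply: divr_ge0 => //; nra.
have := kl_term_ge_sub p1 (ltW q1) (fun q0 => ltac:(by move: q1; rewrite q0 ltxx)).
have := kl_term_ge_sub p2 (ltW q2) (fun q0 => ltac:(by move: q2; rewrite q0 ltxx)).
lra.
Qed.

Lemma kl_bsc_slope_ge0 s : 0 < s < 1 -> 0 <= kl_bsc_slope s.
Proof.
move=> hs; have := kl_bsc_tangent hs (_ : 0 <= 0 <= 1); rewrite lexx ler01 kl_bsc0.
have := kl_bsc_ge0 (_ : 0 <= s <= 1); case/andP: hs => s0 s1.
rewrite (ltW s0) (ltW s1) => /(_ isT) ks /(_ isT) tangent.
have : 0 < s * s / 2 by rewrite divr_gt0 ?mulr_gt0.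
nra.
Qed.

Lemma kl_bsc_le s t : 0 <= s -> s <= t -> t <= 1 -> kl_bsc s <= kl_bsc t.
Proof.
move=> s0 st t1; have [->|sn0] := eqVneq s 0.
  by rewrite kl_bsc0 kl_bsc_ge0 // (le_trans s0 st).
have [s1|sn1] := eqVneq s 1.
  by have -> : t = s by apply/le_anti; rewrite st s1 t1.
have hs : 0 < s < 1 by rewrite !lt_def sn0 s0 eq_sym sn1 (le_trans st t1).
have := kl_bsc_tangent hs (_ : 0 <= t <= 1); rewrite (le_trans s0 st) t1 => /(_ isT).
have := kl_bsc_slope_ge0 hs; have : s * s <= t * t by rewrite ler_pM.
nra.
Qed.

Lemma kl_bsc_le_sqr t : 0 <= t <= 1 -> kl_bsc t <= t * t * kl_bsc 1.
Proof.
case/andP => t0 t1; have [->|tn0] := eqVneq t 0; first by rewrite kl_bsc0 !mul0r.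
have [->|tn1] := eqVneq t 1; first by rewrite !mul1r.
have ht : 0 < t < 1 by rewrite !lt_def tn0 t0 eq_sym tn1 t1.
have := kl_bsc_tangent ht (_ : 0 <= 1 <= 1); rewrite lexx ler01 => /(_ isT).
have := kl_bsc_tangent ht (_ : 0 <= 0 <= 1); rewrite lexx ler01 kl_bsc0 => /(_ isT).
set k := kl_bsc_slope t / 2 => k0 k1.
have tt1 : 0 <= 1 - t * t by nra.
(* interpolate the two tangent inequalities with weights t^2 and 1 - t^2 *)
have : 0 <= t * t * (kl_bsc 1 - kl_bsc t - k * (1 * 1 - t * t))
  + (1 - t * t) * (0 - kl_bsc t - k * (0 * 0 - t * t)).
  by rewrite addr_ge0 // mulr_ge0 ?mulr_ge0 ?subr_ge0 //; lra.
nra.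
Qed.

Lemma kl_bsc_jensen (I : finType) (w th : I -> R) t :
  (forall i, 0 <= w i) -> \sum_i w i = 1 -> (forall i, 0 <= th i <= 1) ->
  0 <= t -> t * t <= \sum_i w i * (th i * th i) ->
  kl_bsc t <= \sum_i w i * kl_bsc (th i).
Proof.
move=> w0 w1 th01 t0 tS; set S := \sum_i w i * _ in tS.
have thth i : 0 <= th i * th i <= 1 by case/andP: (th01 i) => *; apply/andP; split; nra.
have S0 : 0 <= S by apply: sumr_ge0 => i _; rewrite mulr_ge0 //; case/andP: (thth i).
have S1 : S <= 1.
  by rewrite -w1; apply: ler_sum => i _; rewrite ler_piMr //; case/andP: (thth i).
have [S_1|Sn1] := eqVneq S 1.
  have -> : \sum_i w i * kl_bsc (th i) = \sum_i w i * kl_bsc 1.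
    apply: eq_bigr => i _; have [->|wi] := eqVneq (w i) 0; first by rewrite !mul0r.
    by rewrite (weight_sqr_sum1 w0 w1 th01 S_1 wi).
  by rewrite -mulr_suml w1 mul1r kl_bsc_le //; nra.
set x := Num.sqrt S.
have xx : x * x = S by rewrite -expr2 sqr_sqrtr.
have x_ge0 : 0 <= x := sqrtr_ge0 S.
have x1 : x < 1.
  have : x * x < 1 by rewrite xx lt_def eq_sym Sn1 S1.
  nra.
have tx : t <= x by nra.
have [x0|xn0] := eqVneq x 0.
  rewrite (_ : t = 0); last by move: tx; rewrite x0; lra.
  by rewrite kl_bsc0 sumr_ge0 // => i _; rewrite mulr_ge0 ?kl_bsc_ge0.
have hx : 0 < x < 1 by rewrite x1 lt_def xn0 x_ge0.
apply: (le_trans (kl_bsc_le t0 tx (ltW x1))).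
apply: (@le_trans _ _
  (\sum_i w i * (kl_bsc x + kl_bsc_slope x / 2 * (th i * th i - x * x)))).
  rewrite (eq_bigr (fun i => w i * kl_bsc x + (kl_bsc_slope x / 2 * (w i * (th i * th i))
    - kl_bsc_slope x / 2 * (x * x) * w i))); last by move=> *; ring.
  rewrite big_split /= sumrB -mulr_suml -!mulr_sumr w1 -/S xx mulr1.
  lra.
by apply: ler_sum => i _; rewrite ler_wpM2l // kl_bsc_tangent.
Qed.

Lemma kl_bsc_E_norm t : -1 <= t <= 1 ->
  kl_term ((1 + t * A) / 2) ((1 + t * B) / 2)
  + kl_term ((1 + t * - A) / 2) ((1 + t * - B) / 2) = kl_bsc `|t|.
Proof.
move=> /andP[t1 t2]; have [t0|t0] := leP 0 t.
  by rewrite ger0_norm // kl_bsc_E // t0.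
rewrite ltr0_norm // -kl_bsc_E; last by apply/andP; split; lra.
by rewrite addrC; congr (kl_term _ _ + kl_term _ _); congr (_ / 2); ring.
Qed.

End BinaryDivergence.

Section BinaryChannels.
Variable R : realType.
Implicit Types (a b : bool -> R) (e t : R).

Lemma sum_option (T : finType) (F : option T -> R) :
  \sum_o F o = F None + \sum_x F (Some x).
Proof.
rewrite (bigD1 None) //=; congr (_ + _).
rewrite (reindex_omap (@Some T) id); last by case.
by apply: eq_bigl => x /=; rewrite eqxx.
Qed.

Lemma is_dist_bool a : is_dist a -> a false = 1 - a true /\ 0 <= a true <= 1.
Proof.
case=> a0; rewrite big_bool /= => a1.
by split; [lra | have := a0 false; have := a0 true; move=> *; apply/andP; split; lra].
Qed.

Lemma is_dist_bias a : is_dist a -> -1 <= 2 * a true - 1 <= 1.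
Proof. by case/is_dist_bool => _ /andP[? ?]; apply/andP; split; lra. Qed.

Lemma bias_lt b : 0 < b true < 1 -> -1 < 2 * b true - 1 < 1.
Proof. by case/andP => ? ?; apply/andP; split; lra. Qed.

Lemma abs_cont_bool_eq a b : is_dist a -> is_dist b -> abs_cont a b ->
  ~ (0 < b true < 1) -> a = b.
Proof.
move=> /is_dist_bool[af _] /is_dist_bool[bf /andP[b0 b1]] ab b01.
have [bt0|bn0] := eqVneq (b true) 0.
  have at0 := ab true bt0.
  by apply: funext; case; [rewrite at0 bt0 | rewrite af bf at0 bt0].
have [bt1|bn1] := eqVneq (b true) 1.
  have bf0 : b false = 0 by rewrite bf bt1 subrr.
  have af0 := ab false bf0.
  have at1 : a true = 1 by move: af0; rewrite af; lra.
  by apply: funext; case; [rewrite at1 bt1 | rewrite af0 bf0].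
by case: b01; rewrite !lt_def bn0 b0 eq_sym bn1 b1.
Qed.

Lemma KLdiv_bool a b : KLdiv a b = kl_term (a true) (b true) + kl_term (a false) (b false).
Proof. by rewrite KLdivE big_bool. Qed.

Lemma KLdiv_BEC e a b : \sum_x a x = 1 -> \sum_x b x = 1 ->
  KLdiv (chan_out (BEC e) a) (chan_out (BEC e) b) = (1 - e) * KLdiv a b.
Proof.
move=> a1 b1.
have outN c : \sum_x c x = 1 -> chan_out (BEC e) c None = e.
  by move=> c1; rewrite /chan_out /BEC -mulr_suml c1 mul1r.
have outS c y : chan_out (BEC e) c (Some y) = (1 - e) * c y.
  by rewrite /chan_out big_bool /BEC; case: y => /=; ring.
rewrite KLdivE sum_option outN // outN // kl_termxx add0r KLdivE mulr_sumr.
by apply: eq_bigr => y _; rewrite !outS kl_termZ.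
Qed.

Lemma KLdiv_BSC t a b : is_dist a -> is_dist b -> 0 < b true < 1 -> 0 <= t <= 1 ->
  KLdiv (chan_out (BSC ((1 - t) / 2)) a) (chan_out (BSC ((1 - t) / 2)) b)
  = kl_bsc (2 * a true - 1) (2 * b true - 1) t.
Proof.
move=> da db b01 t01.
rewrite -(kl_bsc_E (is_dist_bias da) (bias_lt b01) t01) KLdiv_bool.
have out c y : c false = 1 - c true -> chan_out (BSC ((1 - t) / 2)) c y =
    if y then (1 + t * (2 * c true - 1)) / 2 else (1 + t * - (2 * c true - 1)) / 2.
  by move=> cf; rewrite /chan_out big_bool /BSC cf; case: y => /=; field.
by have [af _] := is_dist_bool da; have [bf _] := is_dist_bool db; rewrite !out.
Qed.

Lemma chan_out_BSC0 a : chan_out (BSC 0) a = a.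
Proof.
by apply: funext => y; rewrite /chan_out big_bool /BSC subr0; case: y => /=; ring.
Qed.

Lemma KLdiv_kl_bsc a b : is_dist a -> is_dist b -> 0 < b true < 1 ->
  KLdiv a b = kl_bsc (2 * a true - 1) (2 * b true - 1) 1.
Proof.
move=> da db b01; rewrite -KLdiv_BSC ?ler01 ?lexx // subrr mul0r.
by rewrite !chan_out_BSC0.
Qed.

Lemma KLdiv_bool_ge0 a b : is_dist a -> is_dist b -> abs_cont a b -> 0 <= KLdiv a b.
Proof.
move=> da db ab; have [b01|b01] := pselect (0 < b true < 1).
  by rewrite KLdiv_kl_bsc // kl_bsc_ge0 ?is_dist_bias ?bias_lt ?ler01 ?lexx.
by rewrite (abs_cont_bool_eq da db ab b01) KLdivxx.
Qed.

End BinaryChannels.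

Lemma BEC_row_sum (R : realType) (e : R) x : \sum_y BEC e x y = 1.
Proof. by rewrite sum_option big_bool /BEC; case: x => /=; ring. Qed.

Lemma BSC_row_sum (R : realType) (e : R) x : \sum_y BSC e x y = 1.
Proof. by rewrite big_bool /BSC; case: x => /=; ring. Qed.

Section BISO.
Variables (R : realType) (l : nat) (p : 'I_(l.*2.+1) -> R).
Hypothesis p_dist : is_dist p.
Implicit Types (a b : bool -> R) (i : 'I_(l.*2.+1)).

(* Given that the output lies in {i, -i}, [biso p] acts as BSC((1 - pair_bias i) / 2);
   [pair_weight] splits the probability of that event evenly between i and -i. *)
Definition pair_weight i := (p i + p (rev_ord i)) / 2.
Definition pair_bias i := `|(p (rev_ord i) - p i) / (p i + p (rev_ord i))|.
Definition mean_sq_bias := \sum_i pair_weight i * (pair_bias i * pair_bias i).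

Lemma chan_out_biso a i : chan_out (biso p) a i = a true * p (rev_ord i) + a false * p i.
Proof. by rewrite /chan_out big_bool. Qed.

Lemma sum_rev_ord (F : 'I_(l.*2.+1) -> R) : \sum_i F (rev_ord i) = \sum_i F i.
Proof. by rewrite [RHS](reindex_inj rev_ord_inj). Qed.

Lemma biso_row_sum x : \sum_y biso p x y = 1.
Proof. by case: p_dist => _ p1; case: x; rewrite /biso /biso_neg ?sum_rev_ord. Qed.

Lemma pair_weight_ge0 i : 0 <= pair_weight i.
Proof. by case: p_dist => p0 _; rewrite divr_ge0 ?addr_ge0. Qed.

Lemma sum_pair_weight : \sum_i pair_weight i = 1.
Proof. by case: p_dist => _ p1; rewrite -mulr_suml big_split /= sum_rev_ord p1; field. Qed.

Lemma pair_bias_01 i : 0 <= pair_bias i <= 1.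
Proof.
case: p_dist => p0 _; rewrite /pair_bias normr_ge0 /=.
have q1 := p0 i; have q2 := p0 (rev_ord i).
have [->|mn] := eqVneq (p i + p (rev_ord i)) 0; first by rewrite invr0 mulr0 normr0.
have mp : 0 < p i + p (rev_ord i) by rewrite lt_def mn addr_ge0.
rewrite normrM (gtr0_norm (x := _^-1)) ?invr_gt0 // ler_pdivrMr // mul1r ler_norml.
by apply/andP; split; lra.
Qed.

Lemma mean_sq_bias_01 : 0 <= mean_sq_bias <= 1.
Proof.
have bb i : 0 <= pair_bias i * pair_bias i <= 1.
  by case/andP: (pair_bias_01 i) => *; apply/andP; split; nra.
apply/andP; split.
  by apply: sumr_ge0 => i _; rewrite mulr_ge0 ?pair_weight_ge0 //; case/andP: (bb i).
rewrite -sum_pair_weight; apply: ler_sum => i _.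
by rewrite ler_piMr ?pair_weight_ge0 //; case/andP: (bb i).
Qed.

Lemma KLdiv_biso a b : is_dist a -> is_dist b -> 0 < b true < 1 ->
  KLdiv (chan_out (biso p) a) (chan_out (biso p) b)
  = \sum_i pair_weight i * kl_bsc (2 * a true - 1) (2 * b true - 1) (pair_bias i).
Proof.
move=> da db b01; have [af _] := is_dist_bool da; have [bf _] := is_dist_bool db.
case: p_dist => p0 _; rewrite KLdivE.
set f := fun i => kl_term (chan_out (biso p) a i) (chan_out (biso p) b i).
have -> : \sum_i f i = \sum_i (f i + f (rev_ord i)) / 2.
  by rewrite -mulr_suml big_split /= sum_rev_ord; field.
apply: eq_bigr => i _; rewrite /f !chan_out_biso rev_ordK af bf /pair_weight /pair_bias.
set m := p i + p (rev_ord i).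
have [m0|mn] := eqVneq m 0.
  have pi0 : p i = 0 by have := p0 i; have := p0 (rev_ord i); rewrite /m in m0; lra.
  have pri0 : p (rev_ord i) = 0 by have := p0 i; have := p0 (rev_ord i); rewrite /m in m0; lra.
  by rewrite m0 pi0 pri0 !mulr0 !addr0 !kl_term0 addr0 !mul0r.
set t := (p (rev_ord i) - p i) / m.
have ht : -1 <= t <= 1.
  have mp : 0 < m by rewrite lt_def mn addr_ge0.
  have := p0 i; have := p0 (rev_ord i) => q1 q2.
  by rewrite /t ler_pdivlMr // ler_pdivrMr // /m; apply/andP; split; lra.
have -> : a true * p (rev_ord i) + (1 - a true) * p i = m * ((1 + t * (2 * a true - 1)) / 2).
  by rewrite /t /m; field.
have -> : b true * p (rev_ord i) + (1 - b true) * p i = m * ((1 + t * (2 * b true - 1)) / 2).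
  by rewrite /t /m; field.
have -> : a true * p i + (1 - a true) * p (rev_ord i) = m * ((1 + t * - (2 * a true - 1)) / 2).
  by rewrite /t /m; field.
have -> : b true * p i + (1 - b true) * p (rev_ord i) = m * ((1 + t * - (2 * b true - 1)) / 2).
  by rewrite /t /m; field.
rewrite !kl_termZ -mulrDr (kl_bsc_E_norm (is_dist_bias da) (bias_lt b01) ht).
by rewrite mulrAC.
Qed.

Lemma KLdiv_biso_le a b : is_dist a -> is_dist b -> 0 < b true < 1 ->
  KLdiv (chan_out (biso p) a) (chan_out (biso p) b) <= mean_sq_bias * KLdiv a b.
Proof.
move=> da db b01; rewrite KLdiv_biso // KLdiv_kl_bsc // mulr_suml.
apply: ler_sum => i _; rewrite -mulrA ler_wpM2l ?pair_weight_ge0 //.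
by move: (kl_bsc_le_sqr (is_dist_bias da) (bias_lt b01) (pair_bias_01 i)).
Qed.

Lemma KLdiv_biso_ratio_le a b : is_dist a -> is_dist b -> abs_cont a b -> 0 < KLdiv a b ->
  KLdiv (chan_out (biso p) a) (chan_out (biso p) b) / KLdiv a b <= mean_sq_bias.
Proof.
move=> da db ab KLab; have [b01|b01] := pselect (0 < b true < 1).
  by rewrite ler_pdivrMr // KLdiv_biso_le.
by move: KLab; rewrite (abs_cont_bool_eq da db ab b01) KLdivxx ltxx.
Qed.

Lemma etaKL_biso_le : etaKL (biso p) <= mean_sq_bias.
Proof.
rewrite /etaKL; set S := (X in sup X).
have [[r Sr]|noS] := pselect (exists r, S r).
  apply: ge_sup; first by exists r.
  by move=> _ [a [b [da db ab KLab ->]]]; exact: KLdiv_biso_ratio_le.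
have -> : S = set0 by apply/seteqP; split => // r Sr; apply: noS; exists r.
by rewrite sup0; case/andP: mean_sq_bias_01.
Qed.

Lemma KLdiv_biso_le_etaKL a b : is_dist a -> is_dist b -> abs_cont a b ->
  KLdiv (chan_out (biso p) a) (chan_out (biso p) b) <= etaKL (biso p) * KLdiv a b.
Proof.
move=> da db ab; have [b01|b01] := pselect (0 < b true < 1); last first.
  by rewrite (abs_cont_bool_eq da db ab b01) !KLdivxx mulr0.
have [KL0|KLn0] := eqVneq (KLdiv a b) 0.
  by have := KLdiv_biso_le da db b01; rewrite KL0 !mulr0.
have KLpos : 0 < KLdiv a b by rewrite lt_def KLn0 KLdiv_bool_ge0.
suff : KLdiv (chan_out (biso p) a) (chan_out (biso p) b) / KLdiv a b <= etaKL (biso p).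
  by rewrite ler_pdivrMr.
rewrite /etaKL; set S := (X in sup X).
have Sab : S (KLdiv (chan_out (biso p) a) (chan_out (biso p) b) / KLdiv a b).
  by exists a, b.
apply: sup_upper_bound => //; split; first by eexists; exact: Sab.
exists mean_sq_bias => _ [a' [b' [da' db' ab' KLab' ->]]].
exact: KLdiv_biso_ratio_le.
Qed.

Lemma KLdiv_BSC_le_biso t a b : 0 <= t -> t * t <= mean_sq_bias ->
  is_dist a -> is_dist b -> abs_cont a b ->
  KLdiv (chan_out (BSC ((1 - t) / 2)) a) (chan_out (BSC ((1 - t) / 2)) b)
  <= KLdiv (chan_out (biso p) a) (chan_out (biso p) b).
Proof.
move=> t0 tS da db ab; have [b01|b01] := pselect (0 < b true < 1); last first.
  by rewrite (abs_cont_bool_eq da db ab b01) !KLdivxx.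
have t1 : t <= 1 by case/andP: mean_sq_bias_01 => _ S1; nra.
rewrite KLdiv_BSC ?t0 ?t1 // KLdiv_biso //.
by move: (kl_bsc_jensen (is_dist_bias da) (bias_lt b01) pair_weight_ge0 sum_pair_weight
  pair_bias_01 t0 tS).
Qed.

Lemma sqrt_etaKL_biso_le :
  Num.sqrt (etaKL (biso p)) * Num.sqrt (etaKL (biso p)) <= mean_sq_bias.
Proof.
have [eta0|eta_lt0] := leP 0 (etaKL (biso p)).
  by rewrite -expr2 sqr_sqrtr // etaKL_biso_le.
rewrite ler0_sqrtr ?mul0r; last exact: ltW.
by case/andP: mean_sq_bias_01.
Qed.

End BISO.

Unset Implicit Arguments.

Theorem theorem1 (R : realType) (l : nat) (p : 'I_(l.*2.+1) -> R) :
  (0 < l)%N -> is_dist p ->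
  let W := biso p in
  let eta := etaKL W in
  less_noisy (BEC (1 - eta)) W /\ less_noisy W (BSC ((1 - Num.sqrt eta) / 2)).
Proof.
move=> _ p_dist W eta.
split; apply: less_noisy_of_KLdiv_le.
- exact: BEC_row_sum.
- exact: biso_row_sum.
- move=> a b da db ab; rewrite KLdiv_BEC; [|by case: da|by case: db].
  by rewrite opprB addrCA subrr addr0; exact: KLdiv_biso_le_etaKL.
- exact: biso_row_sum.
- exact: BSC_row_sum.
- move=> a b da db ab.
  exact: KLdiv_BSC_le_biso (sqrtr_ge0 _) (sqrt_etaKL_biso_le p_dist) da db ab.
Qed.
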